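(* Under the degree-corrected stochastic block model $DCSBM(n,P,\Theta,Z)$ with regularizer $\tau\ge0$, the matrix $\tilde X^*$ has exactly $K$ distinct rows, and for any nodes $i\ne j$ with $g_i=g_j$, the $i$-th row of $\tilde X^*$ equals the $j$-th row of $\tilde X^*$.
   Context: $n$ nodes, each in exactly one of $K$ nonempty communities, $g_i$ the community of node $i$; $Z\in\{0,1\}^{n\times K}$ with $Z_{ik}=1$ iff $g_i=k$. $P$ is a $K\times K$ symmetric, nonnegative, nonsingular, irreducible matrix; $\theta\in\mathbb{R}^n$ has positive entries, $\Theta=\mathrm{diag}(\theta)$, $\Omega=\Theta ZPZ'\Theta$. Let $\mathscr D$ be diagonal with $\mathscr D_{ii}=\sum_{j=1}^n\Omega_{ij}$, $\mathscr D_\tau=\mathscr D+\tau I$, $\mathscr L_\tau=\mathscr D_\tau^{-1/2}\Omega\mathscr D_\tau^{-1/2}$, and let $N^{\mathscr L_\tau}$ be the column-normalized matrix of $\mathscr L_\tau$ (its $i$-th column is the $i$-th column of $\mathscr L_\tau$ divided by its Euclidean norm). $N^{\mathscr L_\tau}$ has exactly $K$ nonzero eigenvalues, all real. Let $E_{N^{\mathscr L_\tau}}$ be the $K\times K$ diagonal matrix of these nonzero eigenvalues and $V_{N^{\mathscr L_\tau}}$ the $n\times K$ matrix of corresponding unit-norm right eigenvectors; $\tilde X=V_{N^{\mathscr L_\tau}}E_{N^{\mathscr L_\tau}}$, and $\tilde X^*$ is obtained by normalizing each row of $\tilde X$ to unit Euclidean norm. *)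

From HB Require Import structures.
From mathcomp Require Import all_boot all_order all_algebra.
From mathcomp Require Import reals.
Set Implicit Arguments. Unset Strict Implicit. Unset Printing Implicit Defensive.
Import Order.TTheory GRing.Theory Num.Theory.
Local Open Scope ring_scope.

Section DCSBM.
Variable R : realType.

Definition memb_mx (n K : nat) (g : 'I_n -> 'I_K) : 'M[R]_(n, K) :=
  \matrix_(i, k) (g i == k)%:R.

Definition mxpow (K : nat) (P : 'M[R]_K) (m : nat) : 'M[R]_K :=
  iter m (fun A => P *m A) 1%:M.
Definition irreducible_mx (K : nat) (P : 'M[R]_K) : Prop :=
  forall i j : 'I_K, exists m : nat, 0 < mxpow P m i j.

Definition Omega_mx (n K : nat) (P : 'M[R]_K) (theta : 'rV[R]_n)
  (g : 'I_n -> 'I_K) : 'M[R]_n :=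
  diag_mx theta *m memb_mx g *m P *m (memb_mx g)^T *m diag_mx theta.

Definition deg_vec (n : nat) (Om : 'M[R]_n) : 'rV[R]_n :=
  \row_i \sum_(j < n) Om i j.
Definition Dtau_invsqrt (n : nat) (Om : 'M[R]_n) (tau : R) : 'M[R]_n :=
  diag_mx (\row_i (Num.sqrt (deg_vec Om 0 i + tau))^-1).

Definition Ltau (n : nat) (Om : 'M[R]_n) (tau : R) : 'M[R]_n :=
  Dtau_invsqrt Om tau *m Om *m Dtau_invsqrt Om tau.

Definition col_normalize (m n : nat) (A : 'M[R]_(m, n)) : 'M[R]_(m, n) :=
  \matrix_(i, j) (A i j / Num.sqrt (\sum_(k < m) A k j ^+ 2)).

Definition row_normalize (m n : nat) (A : 'M[R]_(m, n)) : 'M[R]_(m, n) :=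
  \matrix_(i, j) (A i j / Num.sqrt (\sum_(k < n) A i k ^+ 2)).

Definition num_distinct_rows (m n : nat) (A : 'M[R]_(m, n)) : nat :=
  size (undup [seq row i A | i <- enum 'I_m]).

End DCSBM.

From HB Require Import structures.
From mathcomp Require Import all_boot all_order all_algebra.
From mathcomp Require Import reals ring.
Set Implicit Arguments. Unset Strict Implicit. Unset Printing Implicit Defensive.
Import Order.TTheory GRing.Theory Num.Theory.
Local Open Scope ring_scope.

(* The entries of the column-normalized regularized Laplacian factor as
   N i j = alpha_i * P (g i) (g j) * beta_j with alpha > 0, i.e.
   N = diag(alpha) Z B.  Since Xt = V diag(lambda) = N V, this gives
   Xt = diag(alpha) Z W with W = B V a K x K matrix, and rank Xt = rank V = K
   forces W to be invertible.  Row normalization cancels the positive factor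
   alpha_i, so row i of Xs is row (g i) of the row-normalized W, which is
   again invertible and therefore has K pairwise distinct rows. *)

Lemma sum_indicator_mul (R : pzSemiRingType) (K : nat) (a : 'I_K) (F : 'I_K -> R) :
  \sum_(k < K) (a == k)%:R * F k = F a.
Proof.
rewrite (bigD1 a) //= eqxx mul1r big1 ?addr0 // => k.
by rewrite eq_sym => /negbTE ->; rewrite mul0r.
Qed.

Lemma unitmx_row_neq0 (F : fieldType) (n : nat) (A : 'M[F]_n) (k : 'I_n) :
  A \in unitmx -> row k A != 0.
Proof.
move=> A_unit; apply: contraTneq isT => rowA0.
have := row1 F k; rewrite -(mulmxV A_unit) row_mul rowA0 mul0mx => /rowP/(_ k).
by rewrite !mxE !eqxx => /esym/eqP; rewrite oner_eq0.
Qed.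

Lemma unitmx_row_inj (F : fieldType) (n : nat) (A : 'M[F]_n) :
  A \in unitmx -> injective (fun k : 'I_n => row k A).
Proof.
move=> A_unit k l eq_row; apply/eqP; apply: contraTT A_unit => k_neq_l.
rewrite unitmxE (determinant_alternate k_neq_l) ?unitr0 // => j.
by have /rowP/(_ j) := eq_row; rewrite !mxE.
Qed.

Lemma rank_mulmx_unitmx (F : fieldType) (n K : nat) (A : 'M[F]_(n, K)) (W : 'M[F]_K) :
  \rank (A *m W) = K -> W \in unitmx.
Proof.
move=> rankAW; rewrite -row_free_unit /row_free; apply/eqP/anti_leq.
by rewrite rank_leq_row /= -{1}rankAW mxrankM_maxr.
Qed.

Lemma unitmx_diag (F : fieldType) (n : nat) (d : 'rV[F]_n) :
  (forall k, d 0 k != 0) -> diag_mx d \in unitmx.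
Proof.
by move=> d_neq0; rewrite unitmxE det_diag unitfE; apply/prodf_neq0 => k _.
Qed.

Lemma eigencols_mulmx (F : fieldType) (n K : nat) (N : 'M[F]_n)
    (lambda : 'rV[F]_K) (V : 'M[F]_(n, K)) :
  (forall k, N *m col k V = lambda 0 k *: col k V) -> N *m V = V *m diag_mx lambda.
Proof.
move=> eigV; apply/matrixP => i k; rewrite mul_mx_diag !mxE mulrC.
have /colP/(_ i) := eigV k; rewrite !mxE => <-.
by apply: eq_bigr => j _; rewrite !mxE.
Qed.

Lemma unitmx_pos_entry (R : realFieldType) (K : nat) (P : 'M[R]_K) (k : 'I_K) :
  P \in unitmx -> (forall k l, 0 <= P k l) -> exists l, 0 < P k l.
Proof.
move=> P_unit P_ge0; case: (pickP (fun l => 0 < P k l)) => [l|no_pos]; first by exists l.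
have /negP[] := unitmx_row_neq0 k P_unit; apply/eqP/rowP => l.
by rewrite !mxE; apply/eqP; rewrite eq_le P_ge0 leNgt no_pos.
Qed.

Lemma sum_sqr_row_gt0 (R : realDomainType) (m n : nat) (A : 'M[R]_(m, n)) (k : 'I_m) :
  row k A != 0 -> 0 < \sum_(j < n) A k j ^+ 2.
Proof.
move=> rowA_neq0; rewrite lt_def sumr_ge0 ?andbT => [|j _]; last exact: sqr_ge0.
apply: contra rowA_neq0; rewrite psumr_eq0 => [/allP sqr0|j _]; last exact: sqr_ge0.
apply/eqP/rowP => j; rewrite !mxE; apply/eqP.
by rewrite -sqrf_eq0; apply: (implyP (sqr0 j (mem_index_enum j))).
Qed.

Lemma row_normalize_unitmx (R : realType) (K : nat) (W : 'M[R]_K) :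
  W \in unitmx -> row_normalize W \in unitmx.
Proof.
move=> W_unit.
pose d := \row_k (Num.sqrt (\sum_(j < K) W k j ^+ 2))^-1.
have -> : row_normalize W = diag_mx d *m W.
  by apply/matrixP => k j; rewrite mul_diag_mx !mxE mulrC.
rewrite unitmx_mul W_unit andbT unitmx_diag // => k.
by rewrite mxE invr_neq0 // gt_eqF // sqrtr_gt0 sum_sqr_row_gt0 // unitmx_row_neq0.
Qed.

Lemma LtauE (R : realType) (n : nat) (Om : 'M[R]_n) (tau : R) (i j : 'I_n) :
  let d k := (Num.sqrt (deg_vec Om 0 k + tau))^-1 in
  Ltau Om tau i j = d i * Om i j * d j.
Proof. by rewrite /Ltau /Dtau_invsqrt mul_mx_diag mxE mul_diag_mx !mxE. Qed.

Section MembershipStructure.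
Variables (R : realType) (n K : nat) (g : 'I_n -> 'I_K).

Lemma memb_mulmxE (m : nat) (M : 'M[R]_(K, m)) (i : 'I_n) (j : 'I_m) :
  (memb_mx R g *m M) i j = M (g i) j.
Proof. by rewrite mxE; under eq_bigr do rewrite mxE; exact: sum_indicator_mul. Qed.

Lemma mulmx_tr_membE (m : nat) (M : 'M[R]_(m, K)) (i : 'I_m) (j : 'I_n) :
  (M *m (memb_mx R g)^T) i j = M i (g j).
Proof. by rewrite mxE; under eq_bigr do rewrite !mxE mulrC; exact: sum_indicator_mul. Qed.

Lemma Omega_mxE (P : 'M[R]_K) (theta : 'rV[R]_n) (i j : 'I_n) :
  Omega_mx P theta g i j = theta 0 i * P (g i) (g j) * theta 0 j.
Proof.
by rewrite /Omega_mx mul_mx_diag mxE -!mulmxA mul_diag_mx mxE !mulmxA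
  mulmx_tr_membE memb_mulmxE.
Qed.

Lemma scaled_memb_mulmxE (alpha : 'rV[R]_n) (m : nat) (W : 'M[R]_(K, m)) i j :
  (diag_mx alpha *m memb_mx R g *m W) i j = alpha 0 i * W (g i) j.
Proof. by rewrite -mulmxA mul_diag_mx mxE memb_mulmxE. Qed.

Lemma row_normalize_scaled_memb (alpha : 'rV[R]_n) (m : nat) (W : 'M[R]_(K, m)) i :
  (forall i, 0 < alpha 0 i) ->
  row i (row_normalize (diag_mx alpha *m memb_mx R g *m W)) = row (g i) (row_normalize W).
Proof.
move=> alpha_gt0; have := scaled_memb_mulmxE alpha W i.
set X := diag_mx alpha *m _ *m W; clearbody X => XE.
apply/rowP => j; rewrite !mxE XE; under eq_bigr do rewrite XE exprMn.
rewrite -mulr_sumr sqrtrM ?sqr_ge0 // sqrtr_sqr gtr0_norm // invfM mulrACA.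
by rewrite mulfV ?mul1r ?gt_eqF.
Qed.

Lemma num_distinct_rows_surj (m : nat) (X : 'M[R]_(n, m)) (Y : 'M[R]_(K, m)) :
  (forall k, exists i, g i = k) -> injective (fun k => row k Y) ->
  (forall i, row i X = row (g i) Y) -> num_distinct_rows X = K.
Proof.
move=> g_surj Y_inj rowX; rewrite /num_distinct_rows.
have -> : [seq row i X | i <- enum 'I_n] = [seq row k Y | k <- map g (enum 'I_n)].
  by rewrite -map_comp; apply: eq_map => i /=; rewrite rowX.
suff /perm_size-> : perm_eq (undup [seq row k Y | k <- map g (enum 'I_n)])
                            [seq row k Y | k <- enum 'I_K].
  by rewrite size_map size_enum_ord.
apply: uniq_perm; rewrite ?undup_uniq ?(map_inj_uniq Y_inj) ?enum_uniq // => r.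
rewrite mem_undup; apply/mapP/mapP => [[k _ ->]|[k _ ->]]; first by exists k; rewrite ?mem_enum.
by have [i <-] := g_surj k; exists (g i); rewrite // map_f ?mem_enum.
Qed.

End MembershipStructure.

Section RegularizedLaplacian.
Variables (R : realType) (n K : nat) (g : 'I_n -> 'I_K).
Variables (P : 'M[R]_K) (theta : 'rV[R]_n) (tau : R).
Hypotheses (g_surj : forall k, exists i, g i = k) (P_ge0 : forall k l, 0 <= P k l).
Hypotheses (P_unit : P \in unitmx) (theta_gt0 : forall i, 0 < theta 0 i) (tau_ge0 : 0 <= tau).

Let Om := Omega_mx P theta g.

Lemma deg_Omega_gt0 (i : 'I_n) : 0 < deg_vec Om 0 i.
Proof.
have [l Pl_gt0] := unitmx_pos_entry (g i) P_unit P_ge0.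
have [j gj] := g_surj l.
have Om_ge0 j' : 0 <= Om i j' by rewrite Omega_mxE !mulr_ge0 ?P_ge0 // ltW.
rewrite mxE (bigD1 j) //= ltr_wpDr ?sumr_ge0 //.
by rewrite Omega_mxE gj !mulr_gt0.
Qed.

Lemma col_normalize_Ltau_factor :
  exists2 alpha : 'rV[R]_n, (forall i, 0 < alpha 0 i) &
    exists B : 'M[R]_(K, n),
      col_normalize (Ltau Om tau) = diag_mx alpha *m memb_mx R g *m B.
Proof.
pose d i := (Num.sqrt (deg_vec Om 0 i + tau))^-1.
pose c j := Num.sqrt (\sum_(k < n) Ltau Om tau k j ^+ 2).
exists (\row_i (theta 0 i * d i)) => [i|].
  by rewrite mxE mulr_gt0 // invr_gt0 sqrtr_gt0 ltr_wpDr ?deg_Omega_gt0.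
exists (\matrix_(k, j) (P k (g j) * (theta 0 j * d j / c j))).
apply/matrixP => i j; rewrite scaled_memb_mulmxE mxE LtauE Omega_mxE /d /c !mxE.
by ring.
Qed.

End RegularizedLaplacian.

Theorem lemma6 (R : realType) (n K : nat) (g : 'I_n -> 'I_K)
  (P : 'M[R]_K) (theta : 'rV[R]_n) (tau : R)
  (lambda : 'rV[R]_K) (V : 'M[R]_(n, K)) :
  (* each community is nonempty *)
  (forall k : 'I_K, exists i : 'I_n, g i = k) ->
  (* P symmetric, nonnegative, nonsingular, irreducible *)
  P^T = P ->
  (forall k l, 0 <= P k l) ->
  P \in unitmx ->
  irreducible_mx P ->
  (* theta positive, tau >= 0 *)
  (forall i, 0 < theta 0 i) ->
  0 <= tau ->
  let N := col_normalize (Ltau (Omega_mx P theta g) tau) in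
  (* lambda lists the K nonzero eigenvalues of N (with algebraic multiplicity) *)
  char_poly N = 'X ^+ (n - K) * \prod_(k < K) ('X - (lambda 0 k)%:P) ->
  (forall k, lambda 0 k != 0) ->
  (* V : unit-norm right eigenvectors for these eigenvalues, linearly independent *)
  (forall k, N *m col k V = lambda 0 k *: col k V) ->
  (forall k, \sum_(i < n) V i k ^+ 2 = 1) ->
  \rank V = K ->
  let Xt := V *m diag_mx lambda in
  let Xs := row_normalize Xt in
  num_distinct_rows Xs = K /\
  (forall i j : 'I_n, i != j -> g i = g j -> row i Xs = row j Xs).
Proof.
move=> g_surj _ P_ge0 P_unit _ theta_gt0 tau_ge0 N _ lambda_neq0 eigV _ rankV Xt Xs.
have [alpha alpha_gt0 [B defN]] :=
  col_normalize_Ltau_factor g_surj P_ge0 P_unit theta_gt0 tau_ge0.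
pose W := B *m V.
have XtE : Xt = diag_mx alpha *m memb_mx R g *m W.
  by rewrite /Xt -(eigencols_mulmx eigV) /N defN !mulmxA.
have W_unit : W \in unitmx.
  apply: (rank_mulmx_unitmx (A := diag_mx alpha *m memb_mx R g)).
  by rewrite -XtE mxrankMfree // row_free_unit unitmx_diag.
have rowXs i : row i Xs = row (g i) (row_normalize W).
  by rewrite /Xs XtE row_normalize_scaled_memb.
split; last by move=> i j _ gij; rewrite !rowXs gij.
exact: num_distinct_rows_surj g_surj (unitmx_row_inj (row_normalize_unitmx W_unit)) rowXs.
Qed.
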